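(* Let $K$ be a perfect field with $\mathrm{char}(K)\neq 2$ and algebraic closure $K_a$. Suppose that $E\subset\mathbb{P}^2$ is an absolutely irreducible cubic curve defined over $K$, and that $B\subset E(K_a)$ is a $7$-element set which is a $\mathrm{Gal}(K)$-orbit. Assume that the image $G_B$ of $\mathrm{Gal}(K)$ in the group $\mathrm{Perm}(B)$ of all permutations of $B$ is either $\mathrm{Perm}(B)\cong\mathbf{S}_7$ or the alternating group $\mathbf{A}_7$. Then $B$ is in general position, i.e. no three points of $B$ lie on a line and no six points of $B$ lie on a conic. *)

From HB Require Import structures.
From mathcomp Require Import all_boot all_order all_algebra all_fingroup.
From mathcomp Require Import mpoly.
Set Implicit Arguments. Unset Strict Implicit. Unset Printing Implicit Defensive.
Import GRing.Theory.
Local Open Scope ring_scope.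

Definition perfect_field (K : fieldType) : Prop :=
  (forall p : nat, p \notin [pchar K]) \/
  (exists2 p : nat, p \in [pchar K] & forall y : K, exists x : K, x ^+ p = y).

Definition is_algebraic_closure (K : fieldType) (L : closedFieldType)
  (iota : {rmorphism K -> L}) : Prop :=
  forall x : L, exists2 p : {poly K}, p != 0 & root (map_poly iota p) x.

Definition in_Gal (K : fieldType) (L : closedFieldType)
  (iota : {rmorphism K -> L}) (s : {rmorphism L -> L}) : Prop :=
  bijective s /\ forall x : K, s (iota x) = iota x.

(* Homogeneous coordinates of points of P^2(L). *)
Definition point3 (L : fieldType) := 'I_3 -> L.

Definition proj_nonzero (L : fieldType) (x : point3 L) : Prop := exists i, x i != 0.

Definition proj_eq (L : fieldType) (x y : point3 L) : Prop :=
  exists2 c : L, c != 0 & forall i, y i = c * x i.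

Definition gal_act (L : fieldType) (s : {rmorphism L -> L}) (x : point3 L)
  : point3 L := fun i => s (x i).

Definition mconstant (L : fieldType) (G : {mpoly L[3]}) : Prop := (msize G <= 1)%N.

Definition abs_irreducible (L : fieldType) (F : {mpoly L[3]}) : Prop :=
  ~ mconstant F /\ forall G H : {mpoly L[3]}, F = G * H -> mconstant G \/ mconstant H.

Definition lie_on_curve_of_degree (L : fieldType) (d m : nat) (xs : 'I_m -> point3 L)
  : Prop :=
  exists Q : {mpoly L[3]}, [/\ Q != 0, Q \is d.-homog & forall i, Q.@[xs i] = 0].

Definition general_position7 (L : fieldType) (b : 'I_7 -> point3 L) : Prop :=
  (forall f : 'I_3 -> 'I_7, injective f ->
     ~ lie_on_curve_of_degree 1 (fun i => b (f i))) /\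
  (forall f : 'I_6 -> 'I_7, injective f ->
     ~ lie_on_curve_of_degree 2 (fun i => b (f i))).

Definition in_image_GB (K : fieldType) (L : closedFieldType)
  (iota : {rmorphism K -> L}) (b : 'I_7 -> point3 L) (pi : 'S_7) : Prop :=
  exists s : {rmorphism L -> L}, in_Gal iota s /\
    forall i : 'I_7, proj_eq (gal_act s (b i)) (b (pi i)).

From mathcomp Require Import alt.
Definition Alt7 : {set 'S_7} := Alt 'I_7.

From HB Require Import structures.
From mathcomp Require Import all_boot all_order all_algebra all_fingroup.
From mathcomp Require Import mpoly alt primitive_action zify ring.
Set Implicit Arguments. Unset Strict Implicit. Unset Printing Implicit Defensive.
Import GRing.Theory.
Local Open Scope ring_scope.

(* Since G_B contains A_7, which acts 5-transitively on B, Galois conjugation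
   carries any three points of B onto any other three, and six points onto any
   six.  If three points of B were collinear, every triple would be, so the line
   through b0 and b1 would meet the cubic in the four points b0, ..., b3 and be a
   component of it.  If six points lay on a conic, then for each r some conic
   would pass through B minus b_r; two of them share five points, no three
   collinear, so they coincide and pass through all of B.  A cubic meeting a
   conic in seven points contains it.  Either way E would be reducible. *)

Lemma meval_map_mpoly (n : nat) (R S : comNzRingType) (f : {rmorphism R -> S})
    (p : {mpoly R[n]}) (v : 'I_n -> R) :
  f p.@[v] = (map_mpoly f p).@[f \o v].
Proof.
elim/mpolyind: p => [|c m p _ _ IH]; first by rewrite meval0 rmorph0 raddf0 meval0.
rewrite mevalD rmorphD raddfD /= mevalD IH; congr (_ + _).
rewrite map_mpolyZ map_mpolyX !mevalZ !mevalX rmorphM rmorph_prod; congr (_ * _).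
by apply: eq_bigr => i _; rewrite rmorphXn.
Qed.

Lemma dhomog_mevalZ (n d : nat) (R : comNzRingType) (p : {mpoly R[n]}) (c : R)
    (x : 'I_n -> R) :
  p \is d.-homog -> p.@[fun i => c * x i] = c ^+ d * p.@[x].
Proof.
move=> /dhomogP hp; rewrite !mevalE mulr_sumr; apply: eq_big_seq => m /hp hm.
rewrite mulrCA; congr (_ * _).
have <- : (\sum_i m i)%N = d by rewrite -mdegE.
rewrite -prodrXr -big_split /=.
by apply: eq_bigr => i _; rewrite exprMn.
Qed.

Lemma map_mpoly_eq0 (n : nat) (K L : fieldType) (f : {rmorphism K -> L})
    (p : {mpoly K[n]}) :
  (map_mpoly f p == 0) = (p == 0).
Proof.
apply/eqP/eqP => [fp0|->]; last by rewrite raddf0.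
by apply/mpolyP => m; apply: (fmorph_inj f); rewrite -mcoeff_map_mpoly fp0 !mcoeff0 rmorph0.
Qed.

Lemma map_mpoly_dhomog (n d : nat) (K L : fieldType) (f : {rmorphism K -> L})
    (p : {mpoly K[n]}) :
  p \is d.-homog -> map_mpoly f p \is d.-homog.
Proof.
move=> /dhomogP hp; apply/dhomogP => m.
by rewrite mcoeff_msupp mcoeff_map_mpoly fmorph_eq0 -mcoeff_msupp => /hp.
Qed.

Lemma msize_dhomog (n d : nat) (R : nzRingType) (p : {mpoly R[n]}) :
  p != 0 -> p \is d.-homog -> msize p = d.+1.
Proof. by move=> p0 /dhomogP hp; rewrite -(mlead_deg p0) hp // mlead_supp. Qed.

Lemma msize_dhomog_le (n d : nat) (R : nzRingType) (p : {mpoly R[n]}) :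
  p \is d.-homog -> (msize p <= d.+1)%N.
Proof.
by have [->|p0 hp] := eqVneq p 0; rewrite ?msize0 // (msize_dhomog p0 hp).
Qed.

Lemma pihomogMl (n e d : nat) (R : comNzRingType) (l p : {mpoly R[n]}) :
  l \is e.-homog -> pihomog mdeg (e + d) (l * p) = l * pihomog mdeg d p.
Proof.
move=> hl; set k := maxn (msize p) d.+1.
rewrite {1}(pihomog_partitionE (k := k) (p := p) (leq_maxl _ _)) mulr_sumr linear_sum /=.
have dk : (d < k)%N by rewrite leq_maxr.
rewrite (bigD1 (Ordinal dk)) //= big1 ?addr0.
  by rewrite pihomog_dE //; apply: (dhomogM hl); apply: pihomogP.
move=> j hj; apply: (pihomog_ne0 (d := (e + j)%N)).
  by apply: contra hj => /eqP /addnI hj'; apply/eqP; apply: val_inj.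
by apply: (dhomogM hl); apply: pihomogP.
Qed.

Section ClosedFieldInfinite.
Variable L : closedFieldType.

Lemma closed_field_avoid (s : seq L) : exists x, x \notin s.
Proof.
pose q := \prod_(a <- s) ('X - a%:P).
have q0 : q != 0 by apply/monic_neq0/monic_prod_XsubC.
have sq : size (q * 'X - 1) != 1%N.
  by rewrite size_polyDl ?size_polyN ?size_poly1 size_mulX // size_prod_XsubC.
have [x] := closed_rootP _ sq; rewrite /root !hornerE => hx.
exists x; rewrite -root_prod_XsubC -/q /root; apply: contraL hx => /eqP ->.
by rewrite mul0r sub0r oppr_eq0 oner_eq0.
Qed.

Lemma horner_eq0_poly (q : {poly L}) : (forall t, q.[t] = 0) -> q = 0.
Proof.
move=> hq; apply/eqP; apply: contraT => q0.
have [s [us ss]] : exists s : seq L, uniq s /\ size s = size q.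
  elim: (size q) => [|k [s [us ss]]]; first by exists [::].
  by have [x hx] := closed_field_avoid s; exists (x :: s); rewrite /= hx us ss.
have rs : all (root q) s by apply/allP => x _; rewrite /root hq.
by have := max_poly_roots q0 rs us; rewrite ss ltnn.
Qed.

End ClosedFieldInfinite.

Section PolyOfMpoly.
Variables (L : fieldType) (n : nat).
Implicit Types (p : {mpoly L[n]}) (V : 'I_n -> {poly L}).

Definition meval_poly (p : {mpoly L[n]}) (V : 'I_n -> {poly L}) : {poly L} :=
  (map_mpoly polyC p).@[V].

Lemma horner_meval_poly p V t : (meval_poly p V).[t] = p.@[fun i => (V i).[t]].
Proof.
rewrite /meval_poly -horner_evalE meval_map_mpoly.
have -> : map_mpoly (horner_eval t) (map_mpoly polyC p) = p.
  by apply/mpolyP => m; rewrite !mcoeff_map_mpoly /= horner_evalE hornerC.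
by apply: meval_eq => i /=; rewrite horner_evalE.
Qed.

Lemma size_prod_exp_linear (I : Type) (r : seq I) (V : I -> {poly L}) (m : I -> nat) :
  (forall i, size (V i) <= 2)%N ->
  (size (\prod_(i <- r) V i ^+ m i)%R <= (\sum_(i <- r) m i).+1)%N.
Proof.
move=> hV; elim: r => [|i r IH]; first by rewrite !big_nil size_poly1.
rewrite !big_cons; apply: (leq_trans (size_polyMleq _ _)).
have hi : (size (V i ^+ m i) <= (m i).+1)%N.
  apply: (leq_trans (size_poly_exp_leq _ _)); rewrite ltnS.
  by have := hV i; case: (size (V i)) => [|[|[|]]] //= _; rewrite ?mul0n ?mul1n.
move: hi IH; set a := size _; set c := size _.
by case: a => [|a]; case: c => [|c] /=; lia.
Qed.

Lemma size_linear_poly (c e : L) : (size (c%:P + e%:P * 'X)%R <= 2)%N.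
Proof.
rewrite addrC size_MXaddC; case: ifP => // _.
by rewrite ltnS size_polyC leq_b1.
Qed.

Lemma size_meval_poly_linear p V :
  (forall i, size (V i) <= 2)%N -> (size (meval_poly p V) <= msize p)%N.
Proof.
move=> hV; rewrite /meval_poly mevalE.
apply: (leq_trans (size_sum _ _ _)); apply/bigmax_leqP_seq => m hm _.
have hmp : m \in msupp p.
  by move: hm; rewrite !mcoeff_msupp mcoeff_map_mpoly polyC_eq0.
apply: (leq_trans (size_polyMleq _ _)); rewrite mcoeff_map_mpoly.
have hc := size_polyC_leq1 p@_m.
have hprod := size_prod_exp_linear (index_enum 'I_n) m hV.
have hdeg := msize_mdeg_lt hmp; rewrite mdegE in hdeg.
move: hc hprod hdeg; set a := size _; set c := size _; set k := (\sum_(j <- _) _)%N.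
by case: a => [|a]; case: c => [|c] /=; lia.
Qed.

End PolyOfMpoly.

Definition o0 : 'I_3 := @Ordinal 3 0 isT.
Definition o1 : 'I_3 := @Ordinal 3 1 isT.
Definition o2 : 'I_3 := @Ordinal 3 2 isT.

Lemma ord3P (i : 'I_3) : [\/ i = o0, i = o1 | i = o2].
Proof.
by case: i => [[|[|[|]]] h] //; [constructor 1|constructor 2|constructor 3]; apply: val_inj.
Qed.

Lemma big_ord3 (R : Type) (idx : R) (op : Monoid.law idx) (F : 'I_3 -> R) :
  \big[op/idx]_(i < 3) F i = op (F o0) (op (F o1) (F o2)).
Proof.
rewrite !big_ord_recl big_ord0 Monoid.mulm1.
by congr (op (F _) (op (F _) (F _))); apply: val_inj.
Qed.

Lemma mdeg_ord3 (m : 'X_{1..3}) : mdeg m = (m o0 + (m o1 + m o2))%N.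
Proof. by rewrite mdegE big_ord3. Qed.

Lemma base_digits_inj (N a b c d : nat) : (a < N)%N -> (c < N)%N ->
  (a + N * b = c + N * d)%N -> a = c /\ b = d.
Proof.
move=> ha hc h; have N0 : (0 < N)%N by apply: leq_ltn_trans ha.
have := congr1 (modn^~ N) h; have := congr1 (divn^~ N) h.
rewrite /= !(addnC _ (N * _)%N) !(mulnC N) !modnMDl !divnMDl // !modn_small //.
by rewrite !divn_small // !addn0 => -> ->.
Qed.

(* Kronecker substitution x_i := t ^ (N ^ i), with N = msize p, sends distinct
   monomials of p to distinct powers of t. *)
Lemma mpoly3_eval_eq0 (L : closedFieldType) (p : {mpoly L[3]}) :
  (forall x, p.@[x] = 0) -> p = 0.
Proof.
move=> hp; set N := msize p.
pose e (m : 'X_{1..3}) := (m o0 + N * (m o1 + N * m o2))%N.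
have hkr : meval_poly p (fun i => 'X^(N ^ i)) = \sum_(m <- msupp p) p@_m *: 'X^(e m).
  rewrite /meval_poly mevalE (perm_big _ (msupp_map_mpoly _ (@polyC_inj L))).
  apply: eq_bigr => m _; rewrite mcoeff_map_mpoly mul_polyC; congr (_ *: _).
  rewrite big_ord3 /= -!exprM -!exprD /e; congr (_ ^+ _).
  rewrite /o0 /o1 /o2 /= expn0 expn1 !expnS expn0; nia.
have hkr0 : meval_poly p (fun i => 'X^(N ^ i)) = 0.
  by apply: horner_eq0_poly => t; rewrite horner_meval_poly hp.
have lt_N (m : 'X_{1..3}) i : m \in msupp p -> (m i < N)%N.
  by move/msize_mdeg_lt; rewrite mdeg_ord3 -/N; case: (ord3P i) => ->; lia.
have e_inj : {in msupp p &, injective e}.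
  move=> m m' hm hm' /(base_digits_inj (lt_N _ o0 hm) (lt_N _ o0 hm')) [h0].
  case/(base_digits_inj (lt_N _ o1 hm) (lt_N _ o1 hm')) => h1 h2.
  by apply/mnmP => i; case: (ord3P i) => ->.
apply/mpolyP => m0; rewrite mcoeff0.
have [hm0|] := boolP (m0 \in msupp p); last by rewrite mcoeff_msupp negbK => /eqP.
have := congr1 (fun q : {poly L} => q`_(e m0)) hkr0.
rewrite /= hkr coef0 coef_sum (bigD1_seq m0) ?msupp_uniq //= coefZ coefXn eqxx mulr1.
rewrite big1_seq ?addr0 // => m /andP [hne hm].
rewrite coefZ coefXn; case: eqP => [/e_inj h|]; last by rewrite mulr0.
by move: hne; rewrite h ?eqxx.
Qed.

Section LinearForms.
Variable L : fieldType.
Implicit Types (a x : point3 L) (Q : {mpoly L[3]}).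

Definition dot a x : L := \sum_i a i * x i.

Definition linform a : {mpoly L[3]} := \sum_i a i *: 'X_i.

Lemma dotE a x : dot a x = a o0 * x o0 + (a o1 * x o1 + a o2 * x o2).
Proof. by rewrite /dot big_ord3. Qed.

Lemma meval_linform a x : (linform a).@[x] = dot a x.
Proof. by rewrite /linform /dot raddf_sum /=; apply: eq_bigr => i _; rewrite mevalZ mevalXU. Qed.

Lemma linform_dhomog a : linform a \is 1.-homog.
Proof. by apply: rpred_sum => i _; apply/rpredZ; rewrite dhomogX; apply/eqP/mdeg1. Qed.

Lemma mcoeff_linform a i : (linform a)@_U_(i) = a i.
Proof.
rewrite /linform raddf_sum /= (bigD1 i) //= mcoeffZ mcoeffX eqxx mulr1.
rewrite big1 ?addr0 // => j ji; rewrite mcoeffZ mcoeffX.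
case: eqP => [/(congr1 (fun m : 'X_{1..3} => m i))|]; last by rewrite mulr0.
by rewrite !mnm1E eqxx => /eqP; rewrite eqb1 (negbTE ji).
Qed.

Lemma linform_neq0 a : linform a != 0 <-> proj_nonzero a.
Proof.
split=> [|[i ai]]; last by apply: contraNneq ai => h; rewrite -(mcoeff_linform a i) h mcoeff0.
move=> a0; have /existsP [i ai] : [exists i, a i != 0]; last by exists i.
apply: contraNT a0; rewrite negb_exists => /forallP na; apply/eqP.
by rewrite /linform big1 // => i _; rewrite (eqP (negPn (na i))) scale0r.
Qed.

Lemma dhomog1_linformE Q : Q \is 1.-homog -> Q = linform (fun i => Q@_U_(i)).
Proof.
move=> /dhomogP hQ; apply/mpolyP => m.
have [hm|hm] := boolP (m \in msupp Q).
  by have /eqP/mdeg1P [i /eqP ->] := hQ m hm; rewrite mcoeff_linform.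
have -> : Q@_m = 0 by apply/eqP; rewrite mcoeff_eq0.
rewrite /linform raddf_sum /= big1 // => i _; rewrite mcoeffZ mcoeffX.
case: eqP => [hi|]; last by rewrite mulr0.
by move: hm; rewrite -hi mcoeff_msupp negbK => /eqP ->; rewrite mul0r.
Qed.

Lemma dot_with a x k t : dot a [eta x with k |-> t] = dot a x + a k * (t - x k).
Proof.
rewrite /dot (bigD1 k) //= [X in _ = X + _](bigD1 k) //= eqxx.
rewrite (eq_bigr (fun i => a i * x i)) => [|i /negbTE -> //]; ring.
Qed.

Definition coord_free (k : 'I_3) Q := forall x t, Q.@[x] = Q.@[[eta x with k |-> t]].

(* Modulo linform a, the variable x_k is congruent to a linear form free of x_k. *)
Lemma linform_divmod a k Q : a k != 0 ->
  exists R S, Q = linform a * R + S /\ coord_free k S.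
Proof.
move=> ak; pose dvm P := exists R S, P = linform a * R + S /\ coord_free k S.
have dvmC c : dvm c%:MP by exists 0, c%:MP; split=> [|x t]; rewrite ?mulr0 ?add0r ?mevalC.
have dvmM P1 P2 : dvm P1 -> dvm P2 -> dvm (P1 * P2).
  move=> [R1 [S1 [-> f1]]] [R2 [S2 [-> f2]]].
  exists (R1 * (linform a * R2 + S2) + S1 * R2), (S1 * S2); split; first by ring.
  by move=> x t; rewrite !mevalM -f1 -f2.
have dvmX i : dvm 'X_i.
  have [->|ik] := eqVneq i k; last first.
    by exists 0, 'X_i; split=> [|x t]; rewrite ?mulr0 ?add0r // !mevalXU /= (negbTE ik).
  exists (a k)^-1%:MP, ('X_k - (a k)^-1 *: linform a); split.
    by rewrite [linform a * _]mulrC mul_mpolyC addrC subrK.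
  move=> x t; rewrite !mevalB !mevalZ !mevalXU !meval_linform dot_with /= eqxx.
  by field.
elim/mpolyind: Q => [|c m p _ _ [R [S [-> fS]]]]; first exact: (dvmC 0).
have [R' [S' [-> fm]]] : dvm 'X_[m].
  rewrite mpolyXE_id; apply: (big_ind dvm) => // [|i _]; first exact: (dvmC 1).
  by elim: (m i) => [|e IH]; rewrite ?expr0 ?exprS; [exact: (dvmC 1)|exact: dvmM].
exists (c *: R' + R), (c *: S' + S); split; first by rewrite scalerDr mulrDr -scalerAr addrACA.
by move=> x t; rewrite !mevalD !mevalZ -fm -fS.
Qed.

End LinearForms.

Lemma linform_dvd (L : closedFieldType) (a : point3 L) (Q : {mpoly L[3]}) :
  proj_nonzero a -> (forall x, dot a x = 0 -> Q.@[x] = 0) ->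
  exists R, Q = linform a * R.
Proof.
move=> [k ak] hQ; have [R [S [QE fS]]] := linform_divmod Q ak.
exists R; suff S0 : S = 0 by rewrite QE S0 addr0.
apply: mpoly3_eval_eq0 => x.
have hx : dot a [eta x with k |-> x k - dot a x / a k] = 0 by rewrite dot_with; field.
rewrite (fS x (x k - dot a x / a k)); have := hQ _ hx.
by rewrite QE mevalD mevalM meval_linform hx mul0r add0r.
Qed.

Lemma linform_dvd_dhomog (L : closedFieldType) (a : point3 L) (Q : {mpoly L[3]}) d :
  proj_nonzero a -> Q \is d.+1.-homog -> (forall x, dot a x = 0 -> Q.@[x] = 0) ->
  exists2 R, R \is d.-homog & Q = linform a * R.
Proof.
move=> a0 hQ /(linform_dvd a0) [R QE]; exists (pihomog mdeg d R); first exact: pihomogP.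
by rewrite -(pihomogMl d R (linform_dhomog a)) -QE (pihomog_dE hQ).
Qed.

Section PlaneGeometry.
Variable L : fieldType.
Implicit Types (a u v x y : point3 L).

Definition cross u v : point3 L := fun i =>
  if i == o0 then u o1 * v o2 - u o2 * v o1
  else if i == o1 then u o2 * v o0 - u o0 * v o2
  else u o0 * v o1 - u o1 * v o0.

Definition comb u v (al be : L) : point3 L := fun i => al * u i + be * v i.

Lemma cross_o0 u v : cross u v o0 = u o1 * v o2 - u o2 * v o1. Proof. by []. Qed.
Lemma cross_o1 u v : cross u v o1 = u o2 * v o0 - u o0 * v o2. Proof. by []. Qed.
Lemma cross_o2 u v : cross u v o2 = u o0 * v o1 - u o1 * v o0. Proof. by []. Qed.

Ltac coords := rewrite ?dotE ?cross_o0 ?cross_o1 ?cross_o2 /=.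

Lemma dot_crossl u v : dot (cross u v) u = 0. Proof. by coords; ring. Qed.
Lemma dot_crossr u v : dot (cross u v) v = 0. Proof. by coords; ring. Qed.

Lemma dot_crossC x y z : dot (cross y z) x = dot (cross x y) z.
Proof. by coords; ring. Qed.

Lemma cross_comb u v al be al' be' i :
  cross (comb u v al be) (comb u v al' be') i = (al * be' - be * al') * cross u v i.
Proof. by rewrite /cross /comb; case: (ord3P i) => ->; rewrite /=; ring. Qed.

Lemma eq_cross x x' y y' : x =1 x' -> y =1 y' -> cross x y =1 cross x' y'.
Proof. by move=> hx hy i; rewrite /cross !hx !hy. Qed.

Lemma comb10 u v : comb u v 1 0 =1 u.
Proof. by move=> i; rewrite /comb mul1r mul0r addr0. Qed.

Lemma comb01 u v : comb u v 0 1 =1 v.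
Proof. by move=> i; rewrite /comb mul1r mul0r add0r. Qed.

(* Cramer's rule on the line cross u v. *)
Lemma cross_cramer u v x j : dot (cross u v) x = 0 -> cross u v j != 0 ->
  x =1 comb u v (cross x v j / cross u v j) (cross u x j / cross u v j).
Proof.
move=> hx wj i; apply: (mulfI wj); rewrite /comb.
have -> : cross u v j * x i = cross x v j * u i + cross u x j * v i
          + (if i == j then dot (cross u v) x else 0).
  by coords; case: (ord3P j) => ->; case: (ord3P i) => ->; coords; ring.
by rewrite hx if_same addr0; field.
Qed.

Lemma cross_neq0 x y : proj_nonzero x -> proj_nonzero y -> ~ proj_eq x y ->
  proj_nonzero (cross x y).
Proof.
move=> [k xk] [l yl] nxy.
have /existsP [i ci] : [exists i, cross x y i != 0]; last by exists i.
apply: contraT; rewrite negb_exists => /forallP c0; case: nxy.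
have minor i i' : x i * y i' = x i' * y i.
  have h j : cross x y j = 0 by apply/eqP; rewrite -[_ == 0]negbK c0.
  have := h o0; have := h o1; have := h o2; coords => h2 h1 h0.
  apply/eqP; rewrite -subr_eq0; apply/eqP.
  case: (ord3P i) => ->; case: (ord3P i') => ->; rewrite ?subrr //;
  by [rewrite h0|rewrite h1|rewrite h2|rewrite -opprB h0 oppr0|
      rewrite -opprB h1 oppr0|rewrite -opprB h2 oppr0].
exists (y k / x k); last by move=> i; rewrite -{1}(mulKf xk (y i)) minor; field.
rewrite mulf_eq0 invr_eq0 (negbTE xk) orbF.
apply: contra yl => /eqP yk; have := minor k l.
by rewrite yk mulr0 => /eqP; rewrite mulf_eq0 (negbTE xk).
Qed.

Lemma dot_cross_collinear a u v x : proj_nonzero a ->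
  dot a u = 0 -> dot a v = 0 -> dot a x = 0 -> dot (cross u v) x = 0.
Proof.
move=> [k ak] hu hv hx.
have : a k * dot (cross u v) x
       = cross u v k * dot a x + dot a v * cross x u k - dot a u * cross x v k.
  by coords; case: (ord3P k) => ->; coords; ring.
by rewrite hu hv hx !mulr0 !mul0r subr0 addr0 => /eqP; rewrite mulf_eq0 (negbTE ak) => /eqP.
Qed.

Lemma dot_unit a j : dot a (fun i => (i == j)%:R) = a j.
Proof. by rewrite dotE; case: (ord3P j) => ->; rewrite /= ?mulr0 ?mulr1 ?addr0 ?add0r. Qed.

Lemma linform_interpolate p1 p2 (g1 g2 : L) : proj_nonzero (cross p1 p2) ->
  exists z, dot z p1 = g1 /\ dot z p2 = g2.
Proof.
move=> [j ej]; pose e := fun i => (i == j)%:R : L.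
exists (fun i => (g1 * cross p2 e i + g2 * cross e p1 i) / cross p1 p2 j).
have dotE' x : dot (fun i => (g1 * cross p2 e i + g2 * cross e p1 i) / cross p1 p2 j) x
    = (g1 * dot (cross p2 e) x + g2 * dot (cross e p1) x) / cross p1 p2 j.
  by rewrite !dotE; field.
rewrite !dotE' dot_crossC dot_crossl dot_crossr [dot (cross e p1) p2]dot_crossC.
by rewrite [dot (cross p2 e) p1]dot_crossC /e dot_unit; split; field.
Qed.

End PlaneGeometry.

Section BinaryForms.
Variable L : closedFieldType.
Implicit Types (u v : point3 L) (Q : {mpoly L[3]}).

(* At the point at infinity v: Q(v + s u) = s^d Q(u + s^-1 v) has infinitely
   many roots. *)
Lemma dhomog_line_closure Q d u v : Q \is d.-homog ->
  (forall s, Q.@[comb u v 1 s] = 0) -> forall al be, Q.@[comb u v al be] = 0.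
Proof.
move=> hQ hline.
have hv : Q.@[v] = 0.
  pose g := meval_poly Q (fun i => (v i)%:P + (u i)%:P * 'X).
  have gX0 : g * 'X = 0.
    apply: horner_eq0_poly => s; rewrite hornerMX horner_meval_poly.
    have [->|s0] := eqVneq s 0; first by rewrite mulr0.
    have -> : Q.@[fun i => ((v i)%:P + (u i)%:P * 'X).[s]]
              = s ^+ d * Q.@[comb u v 1 s^-1].
      by rewrite -(dhomog_mevalZ _ _ hQ); apply: meval_eq => i; rewrite /comb !hornerE; field.
    by rewrite hline mulr0 mul0r.
  have g0 : g = 0 by move/eqP: gX0; rewrite mulf_eq0 polyX_eq0 orbF => /eqP.
  have := congr1 (horner^~ 0) g0; rewrite /= horner0 horner_meval_poly => <-.
  by apply: meval_eq => i; rewrite !hornerE.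
move=> al be; have [->|al0] := eqVneq al 0.
  have -> : Q.@[comb u v 0 be] = be ^+ d * Q.@[v].
    by rewrite -(dhomog_mevalZ _ _ hQ); apply: meval_eq => i; rewrite /comb mul0r add0r.
  by rewrite hv mulr0.
have -> : Q.@[comb u v al be] = al ^+ d * Q.@[comb u v 1 (be / al)].
  by rewrite -(dhomog_mevalZ _ _ hQ); apply: meval_eq => i; rewrite /comb; field.
by rewrite hline mulr0.
Qed.

(* For a suitable c no zero lies at infinity w.r.t. the basis (u, v + c u), so
   the zeros give d+2 distinct roots of s |-> Q(u + s (v + c u)), of degree <= d+1. *)
Lemma dhomog_line_eq0 Q d u v (al be : 'I_d.+2 -> L) : Q \is d.+1.-homog ->
  (forall k l, k != l -> al k * be l - be k * al l != 0) ->
  (forall k, Q.@[comb u v (al k) (be k)] = 0) ->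
  forall al' be', Q.@[comb u v al' be'] = 0.
Proof.
move=> hQ hdet hk.
have [c hc] := closed_field_avoid [seq al k / be k | k <- enum 'I_d.+2].
pose v' := comb u v c 1.
have combE al' be' : comb u v al' be' =1 comb u v' (al' - c * be') be'.
  by move=> i; rewrite /v' /comb; ring.
suff hline x : Q.@[comb u v' 1 x] = 0.
  by move=> al' be'; rewrite (meval_eq _ (combE al' be')) (dhomog_line_closure hQ).
pose a k := al k - c * be k.
have a_neq0 k : a k != 0.
  apply/eqP => a0; have [be0|be0] := eqVneq (be k) 0.
    have [l kl] : exists l, k != l.
      by have [->|k0] := eqVneq k ord0; [exists ord_max|exists ord0].
    have al0 : al k = 0 by move: a0; rewrite /a be0 mulr0 subr0.
    by have := hdet k l kl; rewrite al0 be0 !mul0r subrr eqxx.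
  move: hc; have -> : c = al k / be k by move/eqP: a0; rewrite subr_eq0 => /eqP ->; field.
  by rewrite (map_f (fun k => al k / be k)) ?mem_enum.
pose t k := be k / a k.
have t_inj : injective t.
  move=> k l tkl; apply/eqP; apply: contraT => kl; have := hdet _ _ kl.
  have -> : al k * be l - be k * al l = a k * a l * (t l - t k).
    by rewrite /t /a; field; rewrite ?a_neq0.
  by rewrite tkl subrr mulr0 eqxx.
pose g := meval_poly Q (fun i => (u i)%:P + (v' i)%:P * 'X).
have gE r : g.[r] = Q.@[comb u v' 1 r].
  by rewrite horner_meval_poly; apply: meval_eq => i; rewrite /comb !hornerE mulrC.
have g_root k : g.[t k] = 0.
  have : Q.@[comb u v (al k) (be k)] = a k ^+ d.+1 * g.[t k].
    rewrite gE -(dhomog_mevalZ _ _ hQ) (meval_eq _ (combE _ _)).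
    by apply: meval_eq => i; rewrite /comb /t -/(a k); field; exact: a_neq0.
  by rewrite hk => /esym/eqP; rewrite mulf_eq0 expf_eq0 (negbTE (a_neq0 k)) andbF => /eqP.
have g0 : g = 0.
  apply/eqP; apply: contraT => g0.
  have size_g : (size g <= d.+2)%N.
    apply: leq_trans (msize_dhomog_le hQ).
    exact: size_meval_poly_linear (fun i => size_linear_poly _ _).
  have roots : all (root g) [seq t k | k <- enum 'I_d.+2].
    by apply/allP => s /mapP [k _ ->]; rewrite /root g_root.
  have := max_poly_roots g0 roots; rewrite map_inj_uniq ?enum_uniq // size_map size_enum_ord.
  by rewrite ltnNge size_g => /(_ isT).
by rewrite -gE g0 horner0.
Qed.

Lemma dhomog_line_factor Q d u v (al be : 'I_d.+2 -> L) :
  Q \is d.+1.-homog -> proj_nonzero (cross u v) ->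
  (forall k l, k != l -> al k * be l - be k * al l != 0) ->
  (forall k, Q.@[comb u v (al k) (be k)] = 0) ->
  exists2 R, R \is d.-homog & Q = linform (cross u v) * R.
Proof.
move=> hQ [j wj] hdet hk; apply: linform_dvd_dhomog => //; first by exists j.
by move=> x hx; rewrite (meval_eq _ (cross_cramer hx wj)) (dhomog_line_eq0 hQ hdet hk).
Qed.

End BinaryForms.

Lemma collinear_line_factor (L : closedFieldType) (Q : {mpoly L[3]}) d (u v : point3 L)
    (xs : 'I_d.+2 -> point3 L) :
  Q \is d.+1.-homog -> proj_nonzero (cross u v) ->
  (forall k l, k != l -> proj_nonzero (cross (xs k) (xs l))) ->
  (forall k, dot (cross u v) (xs k) = 0) -> (forall k, Q.@[xs k] = 0) ->
  exists2 R, R \is d.-homog & Q = linform (cross u v) * R.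
Proof.
move=> hQ [j wj] hxs on_line hk.
pose al k := cross (xs k) v j / cross u v j; pose be k := cross u (xs k) j / cross u v j.
have xsE k : xs k =1 comb u v (al k) (be k) := cross_cramer (on_line k) wj.
apply: (dhomog_line_factor (al := al) (be := be)) => // [|k l kl|k]; first by exists j.
  have [i ci] := hxs k l kl; apply: contraNneq ci => det0.
  by rewrite (eq_cross (xsE k) (xsE l)) cross_comb det0 mul0r.
by rewrite -(meval_eq _ (xsE k)).
Qed.

Lemma lie_on_line (L : fieldType) m (xs : 'I_m -> point3 L) :
  lie_on_curve_of_degree 1 xs <-> exists2 a, proj_nonzero a & forall i, dot a (xs i) = 0.
Proof.
split=> [[Q [Q0 hQ hxs]]|[a a0 hxs]].
  rewrite (dhomog1_linformE hQ) in Q0 hxs.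
  by exists (fun i => Q@_U_(i)); [apply/linform_neq0|move=> i; rewrite -meval_linform].
exists (linform a); split; [exact/linform_neq0|exact: linform_dhomog|].
by move=> i; rewrite meval_linform.
Qed.

Lemma abs_irreducible_dhomog_factor (L : fieldType) (P G H : {mpoly L[3]}) d e :
  P \is d.-homog -> P != 0 -> abs_irreducible P -> P = G * H ->
  G \is e.-homog -> G != 0 -> (0 < e < d)%N -> False.
Proof.
move=> hP P0 [_ irr] PE hG G0 /andP [e0 ed].
have H0 : H != 0 by apply: contraNneq P0 => H0; rewrite PE H0 mulr0.
have := msizeM G0 H0; rewrite -PE (msize_dhomog P0 hP) (msize_dhomog G0 hG).
case: (irr _ _ PE); rewrite /mconstant ?(msize_dhomog G0 hG) => hc; first lia.
by move: hc; case: (msize H) => [|h] /=; lia.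
Qed.

Section SevenPoints.
Variables (L : closedFieldType) (b : 'I_7 -> point3 L).
Hypothesis b_neq0 : forall i, proj_nonzero (b i).
Hypothesis b_inj : forall i j, proj_eq (b i) (b j) -> i = j.

Lemma cross_b_neq0 i j : i != j -> proj_nonzero (cross (b i) (b j)).
Proof. by move=> ij; apply: cross_neq0 => // /b_inj eq_ij; rewrite eq_ij eqxx in ij. Qed.

Lemma cubic_collinear_factor (P : {mpoly L[3]}) (i0 i1 i2 i3 : 'I_7) :
  uniq [:: i0; i1; i2; i3] -> P \is 3.-homog -> (forall i, P.@[b i] = 0) ->
  dot (cross (b i0) (b i1)) (b i2) = 0 -> dot (cross (b i0) (b i1)) (b i3) = 0 ->
  exists2 R, R \is 2.-homog & P = linform (cross (b i0) (b i1)) * R.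
Proof.
move=> u hP Pb h2 h3; have i01 : i0 != i1 by have /andP [] := u; rewrite inE negb_or => /andP [].
pose t := [tuple i0; i1; i2; i3].
apply: (collinear_line_factor (xs := fun k => b (tnth t k))) => //.
- exact: cross_b_neq0.
- by move=> k l kl; apply: cross_b_neq0; apply: contra kl => /eqP /(tuple_uniqP _ u) ->.
- by case=> [[|[|[|[|]]]] ?] //=; rewrite /tnth /= ?dot_crossl ?dot_crossr.
Qed.

Lemma cubic_not_all_triples_collinear (P : {mpoly L[3]}) :
  P \is 3.-homog -> P != 0 -> abs_irreducible P -> (forall i, P.@[b i] = 0) ->
  ~ (forall g : 'I_3 -> 'I_7, injective g -> lie_on_curve_of_degree 1 (fun i => b (g i))).
Proof.
move=> hP P0 irr Pb collinear.
have on_line01 (k : 'I_7) : uniq [:: 0; 1; k] -> dot (cross (b 0) (b 1)) (b k) = 0.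
  move=> u; have /lie_on_line [a a0 ha] := collinear _ (tuple_uniqP [tuple 0; 1; k] u).
  exact: (dot_cross_collinear a0 (ha o0) (ha o1) (ha o2)).
have [R _ PE] := cubic_collinear_factor (i0 := 0) (i1 := 1) (i2 := 2) (i3 := 3)
  isT hP Pb (on_line01 2 isT) (on_line01 3 isT).
apply: (abs_irreducible_dhomog_factor hP P0 irr PE (linform_dhomog _)) => //.
exact/linform_neq0/cross_b_neq0.
Qed.

Hypothesis b_no3_collinear : forall f : 'I_3 -> 'I_7, injective f ->
  ~ lie_on_curve_of_degree 1 (fun i => b (f i)).

Lemma dot_cross_b_neq0 i j k : uniq [:: i; j; k] -> dot (cross (b i) (b j)) (b k) != 0.
Proof.
move=> u; apply/negP => /eqP hk.
have ij : i != j by have /andP [] := u; rewrite inE negb_or => /andP [].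
apply: (b_no3_collinear (tuple_uniqP [tuple i; j; k] u)); apply/lie_on_line.
exists (cross (b i) (b j)); first exact: cross_b_neq0.
by case=> [[|[|[|]]] ?] //=; rewrite /tnth /= ?dot_crossl ?dot_crossr.
Qed.

(* A conic through three collinear points contains their line; the residual
   line then passes through three non-collinear points. *)
Lemma conic_eq0 (D : {mpoly L[3]}) (i j k1 k2 k3 : 'I_7) (c : L) :
  uniq [:: i; j; k1; k2; k3] -> c != 0 -> D \is 2.-homog ->
  D.@[b i] = 0 -> D.@[b j] = 0 -> D.@[comb (b i) (b j) 1 c] = 0 ->
  D.@[b k1] = 0 -> D.@[b k2] = 0 -> D.@[b k3] = 0 -> D = 0.
Proof.
move=> u c0 hD Di Dj Dc D1 D2 D3.
have ij : i != j by have /andP [] := u; rewrite !inE !negb_or => /and4P [].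
pose al := tnth [tuple 1; 0; 1 : L]; pose be := tnth [tuple 0; 1; c].
have [n hn DE] : exists2 n, n \is 1.-homog & D = linform (cross (b i) (b j)) * n.
  apply: (dhomog_line_factor (al := al) (be := be)) => //; first exact: cross_b_neq0.
    move=> k l; case: k => [[|[|[|]]] ?]; case: l => [[|[|[|]]] ?] //= _;
      by rewrite /tnth /= ?mul0r ?mulr0 ?mul1r ?mulr1 ?subr0 ?sub0r ?oppr_eq0 ?oner_eq0.
  case=> [[|[|[|]]] ?] //=; rewrite /tnth /=.
  - by rewrite (meval_eq _ (comb10 _ _)).
  - by rewrite (meval_eq _ (comb01 _ _)).
have n_b k : uniq [:: i; j; k] -> D.@[b k] = 0 -> n.@[b k] = 0.
  move=> uk; rewrite DE mevalM meval_linform => /eqP.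
  by rewrite mulf_eq0 (negbTE (dot_cross_b_neq0 uk)) => /eqP.
have [n0|n0] := eqVneq n 0; first by rewrite DE n0 mulr0.
have u3 : uniq [:: k1; k2; k3] := mask_uniq u [:: false; false; true; true; true].
case: (b_no3_collinear (tuple_uniqP [tuple k1; k2; k3] u3)); exists n; split => //.
case=> [[|[|[|]]] ?] //=; rewrite /tnth /=.
- exact: n_b (mask_uniq u [:: true; true; true]) D1.
- exact: n_b (mask_uniq u [:: true; true; false; true]) D2.
- exact: n_b (mask_uniq u [:: true; true; false; false; true]) D3.
Qed.

Lemma conic_unique (C D : {mpoly L[3]}) (k1 k2 k3 k4 k5 : 'I_7) :
  uniq [:: k1; k2; k3; k4; k5] -> C \is 2.-homog -> C != 0 -> D \is 2.-homog ->
  (forall k, k \in [:: k1; k2; k3; k4; k5] -> C.@[b k] = 0) ->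
  (forall k, k \in [:: k1; k2; k3; k4; k5] -> D.@[b k] = 0) ->
  exists kap, D = kap *: C.
Proof.
move=> u hC C0 hD Cb Db; pose p := comb (b k1) (b k2) 1 1.
have on5 (Q : {mpoly L[3]}) : Q \is 2.-homog -> Q.@[p] = 0 ->
    (forall k, k \in [:: k1; k2; k3; k4; k5] -> Q.@[b k] = 0) -> Q = 0.
  move=> hQ Qp Qb; apply: (conic_eq0 u (oner_neq0 L) hQ) => //;
    by apply: Qb; rewrite !inE eqxx ?orbT.
have Cp : C.@[p] != 0 by apply: contraNneq C0 => Cp; exact/eqP/(on5 _ hC Cp Cb).
have : C.@[p] *: D - D.@[p] *: C = 0.
  apply: on5; first by rewrite rpredB ?rpredZ.
    by rewrite mevalB !mevalZ mulrC subrr.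
  by move=> k hk; rewrite mevalB !mevalZ (Cb _ hk) (Db _ hk) !mulr0 subr0.
move/eqP; rewrite subr_eq0 => /eqP DE; exists (D.@[p] / C.@[p]).
by apply: (scalerI Cp); rewrite DE scalerA mulrC divfK.
Qed.

(* A cubic through seven points of a conic C contains C (7 > 2 * 3): after
   subtracting C * z for a linear z matching P at two points of a chord, the
   remainder vanishes at four points of that chord, hence contains it, and the
   residual conic passes through the other five points, so it is a multiple of C. *)
Lemma conic_dvd_cubic (P C : {mpoly L[3]}) (i j k1 k2 k3 k4 k5 : 'I_7) :
  uniq [:: i; j; k1; k2; k3; k4; k5] ->
  P \is 3.-homog -> C \is 2.-homog -> C != 0 ->
  (forall i, P.@[b i] = 0) -> (forall i, C.@[b i] = 0) -> exists m, P = C * m.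
Proof.
move=> u hP hC C0 Pb Cb.
have u5 : uniq [:: i; j; k1; k2; k3] := mask_uniq u [:: true; true; true; true; true].
have ij : i != j by have /andP [] := u5; rewrite !inE !negb_or => /and4P [].
have [c2] := closed_field_avoid [:: 0; 1 : L]; rewrite !inE negb_or => /andP [c20 c21].
pose p1 := comb (b i) (b j) 1 1; pose p2 := comb (b i) (b j) 1 c2.
have Cp (c : L) : c != 0 -> C.@[comb (b i) (b j) 1 c] != 0.
  by move=> c0; apply: contraNneq C0 => Cc; exact/eqP/(conic_eq0 u5 c0 hC).
have p12 : proj_nonzero (cross p1 p2).
  have [l wl] := cross_b_neq0 ij; exists l.
  by rewrite /p1 /p2 cross_comb mulf_neq0 // !mul1r subr_eq0.
have [z [z1 z2]] := linform_interpolate (P.@[p1] / C.@[p1]) (P.@[p2] / C.@[p2]) p12.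
pose E := P - C * linform z.
have hE : E \is 3.-homog by rewrite rpredB // (dhomogM hC (linform_dhomog z)).
pose al := tnth [tuple 1; 0; 1; 1 : L]; pose be := tnth [tuple 0; 1; 1; c2].
have [Q2 hQ2 EQ] : exists2 Q2, Q2 \is 2.-homog & E = linform (cross (b i) (b j)) * Q2.
  apply: (dhomog_line_factor (al := al) (be := be)) => //; first exact: cross_b_neq0.
  - move=> k l; case: k => [[|[|[|[|]]]] ?]; case: l => [[|[|[|[|]]]] ?] //= _;
      rewrite /tnth /= ?mul0r ?mulr0 ?mul1r ?mulr1 ?subr0 ?sub0r ?oppr_eq0 ?oner_eq0 //.
    + by rewrite subr_eq0.
    + by rewrite subr_eq0 eq_sym.
  - case=> [[|[|[|[|]]]] ?] //=; rewrite /tnth /= /E mevalB mevalM meval_linform.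
    + by rewrite !(meval_eq _ (comb10 _ _)) Pb Cb mul0r subr0.
    + by rewrite !(meval_eq _ (comb01 _ _)) Pb Cb mul0r subr0.
    + by rewrite -/p1 z1; field; exact: Cp (oner_neq0 L).
    + by rewrite -/p2 z2; field; exact: Cp.
have PE : P = E + C * linform z by rewrite /E subrK.
have Q2b k : k \in [:: k1; k2; k3; k4; k5] -> Q2.@[b k] = 0.
  move=> hk; have uk : uniq [:: i; j; k].
    case/and3P: u => hi hj _; rewrite /= !inE !negb_or ?andbT -?andbA; apply/and3P; split.
    - by move: hi; rewrite in_cons negb_or => /andP [].
    - by apply: contraNneq hi => ->; rewrite in_cons hk orbT.
    - by apply: contraNneq hj => ->.
  have nk := dot_cross_b_neq0 uk; have := Pb k.
  rewrite PE EQ mevalD !mevalM meval_linform Cb mul0r addr0 => /eqP.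
  by rewrite mulf_eq0 (negbTE nk) => /eqP.
have [kap Q2E] := conic_unique (mask_uniq u [:: false; false; true; true; true; true; true])
  hC C0 hQ2 (fun k _ => Cb k) Q2b.
exists (linform z + kap *: linform (cross (b i) (b j))).
by rewrite PE EQ Q2E -!mul_mpolyC; ring.
Qed.

Lemma conic_through_seven :
  (forall r : 'I_7, exists2 C : {mpoly L[3]}, C != 0 /\ C \is 2.-homog &
     forall j, j != r -> C.@[b j] = 0) ->
  exists2 C : {mpoly L[3]}, C != 0 /\ C \is 2.-homog & forall j, C.@[b j] = 0.
Proof.
move=> conic_but; have [C [C0 hC] Cb] := conic_but 6; have [D [D0 hD] Db] := conic_but 5.
have not56 (k : 'I_7) : k \in [:: 0; 1; 2; 3; 4] -> (k != 6) && (k != 5).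
  by rewrite -negb_or; apply: contraTN => /orP [] /eqP ->.
have [kap DE] := conic_unique (k1 := 0) (k2 := 1) (k3 := 2) (k4 := 3) (k5 := 4) isT hC C0 hD
  (fun k hk => Cb k (proj1 (andP (not56 k hk)))) (fun k hk => Db k (proj2 (andP (not56 k hk)))).
exists C => // j; have [->|] := eqVneq j 6; last exact: Cb.
have := Db 6 isT; rewrite DE mevalZ => /eqP; rewrite mulf_eq0 => /orP [/eqP kap0|/eqP //].
by move: D0; rewrite DE kap0 scale0r eqxx.
Qed.

End SevenPoints.

Lemma Alt_transitive_inj (T : finType) k (f g : 'I_k -> T) :
  (k <= #|T|.-2)%N -> injective f -> injective g ->
  exists2 pi : {perm T}, pi \in Alt T & forall i, pi (f i) = g i.
Proof.
move=> hk f_inj g_inj; have trk := ntransitive_weak hk (Alt_trans T).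
have dtuple (h : 'I_k -> T) : injective h -> [tuple h i | i < k] \in dtuple_on k setT.
  by move=> h_inj; apply/dtuple_onP; split=> [i j|i]; rewrite ?tnth_mktuple ?inE // => /h_inj.
have [pi Api tfg] := atransP2 trk (dtuple _ f_inj) (dtuple _ g_inj).
exists pi => // i; have := congr1 (fun t : k.-tuple T => tnth t i) tfg.
by rewrite /= !tnth_map !tnth_ord_tuple => ->.
Qed.

Lemma Alt_codom_but_one (T A : finType) (f : A -> T) (r : T) :
  injective f -> #|T| = #|A|.+1 -> (2 < #|T|)%N ->
  exists2 pi : {perm T}, pi \in Alt T & forall j, j != r -> exists i, pi (f i) = j.
Proof.
move=> f_inj cardT cardT3; have cardT1 : (1 <= #|T|.-2)%N by rewrite -subn2 subn_gt0.
have : #|~: [set y in codom f]| == 1%N.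
  have := cardsC [set y in codom f]; rewrite cardsE card_codom // cardT.
  by move=> /eqP; rewrite -addn1 eqn_add2l.
case/cards1P => w missing.
have inj1 (h : 'I_1 -> T) : injective h by move=> i j; rewrite !ord1.
have [pi Api /(_ ord0) piw] := Alt_transitive_inj cardT1 (inj1 (fun=> w)) (inj1 (fun=> r)).
exists pi => // j jr.
have /codomP [i fi] : (pi^-1)%g j \in codom f.
  have : (pi^-1)%g j \notin ~: [set y in codom f].
    by rewrite missing in_set1; apply: contraNneq jr => h; rewrite -piw -h permKV.
  by rewrite !inE negbK.
by exists i; rewrite -fi permKV.
Qed.

Lemma lie_on_curve_of_degree_gal (K : fieldType) (L : closedFieldType)
    (iota : {rmorphism K -> L}) (b : 'I_7 -> point3 L) (pi : 'S_7) d k (f g : 'I_k -> 'I_7) :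
  in_image_GB iota b pi -> (forall i, pi (f i) = g i) ->
  lie_on_curve_of_degree d (fun i => b (f i)) -> lie_on_curve_of_degree d (fun i => b (g i)).
Proof.
move=> [s [_ hs]] pif [Q [Q0 hQ Qb]]; exists (map_mpoly s Q); split.
- by rewrite map_mpoly_eq0.
- exact: map_mpoly_dhomog.
move=> i; have [c c0 sb] := hs (f i); rewrite -pif.
rewrite (meval_eq _ sb) (dhomog_mevalZ _ _ (map_mpoly_dhomog s hQ)).
by rewrite -meval_map_mpoly Qb rmorph0 mulr0.
Qed.

Unset Implicit Arguments.

Theorem proposition5p1
  (K : fieldType) (L : closedFieldType) (iota : {rmorphism K -> L})
  (F : {mpoly K[3]}) (b : 'I_7 -> point3 L) :
  perfect_field K ->
  ~ (2%N \in [pchar K]) ->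
  is_algebraic_closure iota ->
  (* E : F = 0 is an absolutely irreducible plane cubic defined over K *)
  F \is 3.-homog -> F != 0 ->
  abs_irreducible (map_mpoly iota F) ->
  (* B = {b 0, ..., b 6} is a 7-element subset of E(K_a) *)
  (forall i, proj_nonzero (b i)) ->
  (forall i j, proj_eq (b i) (b j) -> i = j) ->
  (forall i, (map_mpoly iota F).@[b i] = 0) ->
  (* B is a Gal(K)-orbit *)
  (forall s, in_Gal iota s -> forall i, exists j, proj_eq (gal_act s (b i)) (b j)) ->
  (forall i j, exists2 s, in_Gal iota s & proj_eq (gal_act s (b i)) (b j)) ->
  (* G_B = Perm(B) or G_B = Alt(B) *)
  ((forall pi : 'S_7, in_image_GB iota b pi) \/
   (forall pi : 'S_7, in_image_GB iota b pi <-> pi \in Alt7)) ->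
  general_position7 b.
Proof.
move=> _ _ _ hF F0 irr b_neq0 b_inj Pb _ _ G_B.
set P := map_mpoly iota F in irr Pb.
have P0 : P != 0 by rewrite map_mpoly_eq0.
have hP : P \is 3.-homog := map_mpoly_dhomog iota hF.
have Alt_GB pi : pi \in Alt7 -> in_image_GB iota b pi by case: G_B => h Api; [apply: h|apply/h].
have no_line (f : 'I_3 -> 'I_7) : injective f -> ~ lie_on_curve_of_degree 1 (fun i => b (f i)).
  move=> f_inj on_f; apply: (cubic_not_all_triples_collinear b_neq0 b_inj hP P0 irr Pb) => g g_inj.
  have card7 : (3 <= #|'I_7|.-2)%N by rewrite card_ord.
  have [pi Api pif] := Alt_transitive_inj card7 f_inj g_inj.
  exact: lie_on_curve_of_degree_gal (Alt_GB _ Api) pif on_f.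
split=> // f f_inj on_f.
have [C [C0 hC] Cb] : exists2 C : {mpoly L[3]}, C != 0 /\ C \is 2.-homog & forall j, C.@[b j] = 0.
  apply: conic_through_seven => // r.
  have [card76 card7] : #|'I_7| = #|'I_6|.+1 /\ (2 < #|'I_7|)%N by rewrite !card_ord.
  have [pi Api pif] := Alt_codom_but_one r f_inj card76 card7.
  have [C [C0 hC Cb]] := lie_on_curve_of_degree_gal (Alt_GB _ Api) (fun=> erefl) on_f.
  by exists C => // j /pif [i <-].
have [m PE] := conic_dvd_cubic b_neq0 b_inj no_line (i := 0) (j := 1) (k1 := 2) (k2 := 3)
  (k3 := 4) (k4 := 5) (k5 := 6) isT hP hC C0 Pb Cb.
exact: abs_irreducible_dhomog_factor hP P0 irr PE hC C0 isT.
Qed.
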